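(* Let $F=\{\mathbb{R}^{n};f_{1},\dots,f_{m}\}$ be an IFS of contractive similitudes (at least two distinct maps) that obeys the open set condition, with contraction factors $\lambda_i=s^{a_i}$ where $s=\max_i\lambda_i$, and take costs $c_{l}=a_{l}$ for all $l\in\{1,\dots,m\}$. Let $\mathbf{i},\mathbf{j}\in\Sigma^{\infty}$ and $p,q\in\mathbb{N}$ be such that $\sigma^{p}\mathbf{i}=\sigma^{q}\mathbf{j}$ and $c(\mathbf{i}|p)=c(\mathbf{j}|q)$. Then for every closed $T\subset\mathbb{R}^n$, \[ \Pi_{T}(\mathbf{i})=E\,\Pi_{T}(\mathbf{j}),\qquad E=f_{i_{1}}^{-1}\circ\cdots\circ f_{i_{p}}^{-1}\circ f_{j_{q}}\circ\cdots\circ f_{j_{1}}. \]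
   Context: An IFS $F$ consists of maps $f_{i}:\mathbb{R}^{n}\to\mathbb{R}^{n}$ with $|f_{i}(x)-f_{i}(y)|=\lambda_{i}|x-y|$, $\lambda_{i}\in(0,1)$. $F$ obeys the open set condition if there is a nonempty open $O$ with $f_i(O)\subset O$ for all $i$ and $f_{i}(O)\cap f_{j}(O)=\emptyset$ for $i\neq j$. Let $\Sigma=\{1,\dots,m\}$, $\Sigma^{\infty}$ the infinite sequences over $\Sigma$, and $\sigma:\Sigma^\infty\to\Sigma^\infty$ the shift $\sigma(i_1i_2i_3\dots)=i_2i_3\dots$. For $\mathbf{i}\in\Sigma^{\infty}$: $\mathbf{i}|k=i_{1}\dots i_{k}$, $\mathbf{i}|0=\emptyset$, $f_{(\mathbf{j}|l)}=f_{j_{1}}\circ\cdots\circ f_{j_{l}}$, $f_{-(\mathbf{i}|k)}=f_{i_{1}}^{-1}\circ\cdots\circ f_{i_{k}}^{-1}$, $c(\mathbf{i}|k)=c_{i_{1}}+\cdots+c_{i_{k}}$, $c(\emptyset)=0$; \[ \Pi_{T}(\mathbf{i}|k)=f_{-(\mathbf{i}|k)}\big(\{f_{(\mathbf{j}|l)}(T):\mathbf{j}\in\Sigma^{\infty},\ l\in\mathbb{N},\ c(\mathbf{j}|l-1)\leq c(\mathbf{i}|k)<c(\mathbf{j}|l)\}\big),\quad \Pi_{T}(\mathbf{i})=\bigcup_{k\geq1}\Pi_{T}(\mathbf{i}|k). \] A map applied to a collection of sets is applied to each member. *)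

From HB Require Import structures.
From mathcomp Require Import all_boot all_order all_algebra.
From mathcomp Require Import all_classical all_reals all_analysis.
Set Implicit Arguments. Unset Strict Implicit. Unset Printing Implicit Defensive.
Import Order.TTheory GRing.Theory Num.Theory numFieldNormedType.Exports.
Local Open Scope ring_scope.
Local Open Scope classical_set_scope.

Definition enorm (R : realType) (n : nat) (x : 'rV[R]_n) : R :=
  Num.sqrt (\sum_(k < n) (x ord0 k) ^+ 2).

(* The (set-theoretic) inverse map f^{-1}: for y, some x with f x = y
   (unique and existing when f is bijective, as similitudes of R^n are). *)
Definition inv_map (R : realType) (n : nat) (f : 'rV[R]_n -> 'rV[R]_n)
  (y : 'rV[R]_n) : 'rV[R]_n := xget (0 : 'rV[R]_n) [set x | f x = y].

(* shift sigma on Sigma^infty = nat -> 'I_m  (symbols 0..m-1) *)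
Definition sshift (m : nat) (i : nat -> 'I_m) : nat -> 'I_m := fun t => i t.+1.

(* i|k = i_1 ... i_k  (i_1 is i 0) *)
Definition wprefix (m : nat) (i : nat -> 'I_m) (k : nat) : seq 'I_m :=
  [seq i t | t <- iota 0 k].

Definition cost (R : realType) (m : nat) (c : 'I_m -> R) (w : seq 'I_m) : R :=
  \sum_(l <- w) c l.

Definition wcomp (R : realType) (n m : nat) (f : 'I_m -> 'rV[R]_n -> 'rV[R]_n)
  (w : seq 'I_m) : 'rV[R]_n -> 'rV[R]_n :=
  foldr (fun l g => f l \o g) id w.

Definition wcompinv (R : realType) (n m : nat) (f : 'I_m -> 'rV[R]_n -> 'rV[R]_n)
  (w : seq 'I_m) : 'rV[R]_n -> 'rV[R]_n :=
  foldr (fun l g => inv_map (f l) \o g) id w.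

Definition imgc (R : realType) (n : nat) (g : 'rV[R]_n -> 'rV[R]_n)
  (C : set (set 'rV[R]_n)) : set (set 'rV[R]_n) :=
  [set g @` A | A in C].

Definition PiT (R : realType) (n m : nat) (f : 'I_m -> 'rV[R]_n -> 'rV[R]_n)
  (c : 'I_m -> R) (T : set 'rV[R]_n) (w : seq 'I_m) : set (set 'rV[R]_n) :=
  imgc (wcompinv f w)
    [set B | exists (j : nat -> 'I_m) (l : nat),
       (cost c (wprefix j (l - 1)) <= cost c w < cost c (wprefix j l))
       /\ B = wcomp f (wprefix j l) @` T].

Definition PiTinf (R : realType) (n m : nat) (f : 'I_m -> 'rV[R]_n -> 'rV[R]_n)
  (c : 'I_m -> R) (T : set 'rV[R]_n) (i : nat -> 'I_m) : set (set 'rV[R]_n) :=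
  \bigcup_(k in [set k : nat | (0 < k)%N]) PiT f c T (wprefix i k).

Definition OSC (R : realType) (n m : nat) (f : 'I_m -> 'rV[R]_n -> 'rV[R]_n) : Prop :=
  exists O : set 'rV[R]_n, open O /\ O !=set0 /\
    (forall l, f l @` O `<=` O) /\
    (forall l1 l2, l1 <> l2 -> f l1 @` O `&` f l2 @` O = set0).

From HB Require Import structures.
From mathcomp Require Import all_boot all_order all_algebra.
From mathcomp Require Import all_classical all_reals all_analysis.
From mathcomp Require Import ring lra.
Set Implicit Arguments. Unset Strict Implicit. Unset Printing Implicit Defensive.
Import Order.TTheory GRing.Theory Num.Theory numFieldNormedType.Exports.
Local Open Scope ring_scope.
Local Open Scope classical_set_scope.

(* A similitude of ratio [lam > 0] of R^n is, after rescaling and translating,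
   an isometry fixing 0; such a map preserves the dot product, hence is given
   by an orthogonal matrix, and is therefore bijective.  So [inv_map (f l)] is
   a genuine two-sided inverse of [f l].  The identity is then combinatorial:
   the sets [Pi_T(i|k)] increase with [k], because prepending [i_(k+1)] to a
   witness [j] of [Pi_T(i|k)] gives a witness of [Pi_T(i|k+1)]; hence [Pi_T(i)]
   is the union of the [Pi_T(i|p+k)], and likewise for [j] with [q].  Since
   [i|p+k] and [j|q+k] share the suffix [(sigma^p i)|k] and have equal costs,
   [Pi_T(i|p+k) = E Pi_T(j|q+k)]. *)

Section DotProduct.
Variables (R : realType) (n : nat).
Implicit Types u v w x : 'rV[R]_n.

Definition dot u v : R := (u *m v^T) ord0 ord0.

Lemma dotE u v : dot u v = \sum_k u ord0 k * v ord0 k.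
Proof. by rewrite /dot mxE; apply: eq_bigr => k _; rewrite mxE. Qed.

Lemma dotC u v : dot u v = dot v u.
Proof. by rewrite !dotE; apply: eq_bigr => k _; rewrite mulrC. Qed.

Lemma dotBl u v w : dot (u - v) w = dot u w - dot v w.
Proof. by rewrite !dotE -sumrB; apply: eq_bigr => k _; rewrite !mxE mulrBl. Qed.

Lemma dotBr u v w : dot w (u - v) = dot w u - dot w v.
Proof. by rewrite ![dot w _]dotC dotBl. Qed.

Lemma dotZl a u v : dot (a *: u) v = a * dot u v.
Proof. by rewrite !dotE mulr_sumr; apply: eq_bigr => k _; rewrite !mxE mulrA. Qed.

Lemma dotZr a u v : dot v (a *: u) = a * dot v u.
Proof. by rewrite ![dot v _]dotC dotZl. Qed.

Lemma dot_polar u v : dot (u - v) (u - v) = dot u u + dot v v - 2 * dot u v.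
Proof. by rewrite dotBl !dotBr (dotC v u); ring. Qed.

Lemma dot_delta x (a : 'I_n) : dot x (delta_mx 0 a) = x ord0 a.
Proof. by rewrite /dot trmx_delta -colE mxE; congr (x _ a); apply/val_inj. Qed.

Lemma enorm_sqr u : enorm u ^+ 2 = dot u u.
Proof.
rewrite /enorm dotE sqr_sqrtr; last by apply: sumr_ge0 => k _; apply: sqr_ge0.
by apply: eq_bigr => k _; rewrite expr2.
Qed.

Lemma enorm0 : enorm (0 : 'rV[R]_n) = 0.
Proof. by rewrite /enorm big1 ?sqrtr0 // => k _; rewrite mxE expr0n. Qed.

Lemma enorm_eq0 u : enorm u = 0 -> u = 0.
Proof.
move=> /(congr1 (fun r => r ^+ 2)); rewrite enorm_sqr expr0n dotE => u0.
apply/rowP => k; rewrite mxE.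
have sq_ge0 (i : 'I_n) : true -> 0 <= u ord0 i * u ord0 i.
  by rewrite -expr2 sqr_ge0.
have /(_ k isT) /eqP := psumr_eq0P sq_ge0 u0.
by rewrite mulf_eq0 orbb => /eqP.
Qed.

End DotProduct.

Section IsometryFixingZero.
Variables (R : realType) (n : nat) (h : 'rV[R]_n -> 'rV[R]_n).
Hypothesis h0 : h 0 = 0.
Hypothesis h_dist : forall x y, dot (h x - h y) (h x - h y) = dot (x - y) (x - y).

Lemma isometry_dot x y : dot (h x) (h y) = dot x y.
Proof.
have h_sqr z : dot (h z) (h z) = dot z z by have := h_dist z 0; rewrite h0 !subr0.
by have := h_dist x y; rewrite !dot_polar !h_sqr; lra.
Qed.

Definition isometry_mx : 'M[R]_n := \matrix_(a, b) h (delta_mx 0 a) ord0 b.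

Lemma isometry_mx_tr x : h x *m isometry_mx^T = x.
Proof.
apply/rowP => a; rewrite -[RHS](dot_delta x) -isometry_dot dotE !mxE.
by apply: eq_bigr => k _; rewrite !mxE.
Qed.

Lemma isometry_mx_orthogonal : isometry_mx^T *m isometry_mx = 1%:M.
Proof.
apply: mulmx1C; apply/row_matrixP => a.
rewrite row_mul row1 -[RHS]isometry_mx_tr; congr (_ *m _).
by apply/rowP => b; rewrite !mxE.
Qed.

Lemma isometry_mxE x : h x = x *m isometry_mx.
Proof.
by rewrite -[h x]mulmx1 -isometry_mx_orthogonal mulmxA isometry_mx_tr.
Qed.

Lemma isometry_surj y : exists x, h x = y.
Proof.
exists (y *m isometry_mx^T).
by rewrite isometry_mxE -mulmxA isometry_mx_orthogonal mulmx1.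
Qed.

End IsometryFixingZero.

Section Similitude.
Variables (R : realType) (n : nat) (g : 'rV[R]_n -> 'rV[R]_n) (lam : R).
Hypothesis lam_gt0 : 0 < lam.
Hypothesis g_sim : forall x y, enorm (g x - g y) = lam * enorm (x - y).

Lemma similitude_inj : injective g.
Proof.
move=> x y gxy; apply/eqP; rewrite -subr_eq0; apply/eqP/enorm_eq0.
have := g_sim x y; rewrite gxy subrr enorm0 => /esym/eqP.
by rewrite mulf_eq0 gt_eqF //= => /eqP.
Qed.

Lemma similitude_surj y : exists x, g x = y.
Proof.
pose h x := lam^-1 *: (g x - g 0).
have h0 : h 0 = 0 by rewrite /h subrr scaler0.
have h_dist x x' : dot (h x - h x') (h x - h x') = dot (x - x') (x - x').
  have -> : h x - h x' = lam^-1 *: (g x - g x').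
    by rewrite -scalerBr opprB addrA subrK.
  rewrite dotZl dotZr -!enorm_sqr g_sim exprMn.
  by field; rewrite gt_eqF.
have [x hx] := isometry_surj h0 h_dist (lam^-1 *: (y - g 0)).
exists x; apply: (addIr (- g 0)); apply: (scalerI (a := lam^-1)); last exact: hx.
by rewrite invr_eq0 gt_eqF.
Qed.

End Similitude.

Lemma inv_mapK (R : realType) (n : nat) (g : 'rV[R]_n -> 'rV[R]_n) :
  injective g -> cancel g (inv_map g).
Proof. by move=> g_inj x; apply: xget_unique => // y /= /g_inj. Qed.

Lemma inv_mapKV (R : realType) (n : nat) (g : 'rV[R]_n -> 'rV[R]_n) :
  (forall y, exists x, g x = y) -> cancel (inv_map g) g.
Proof. by move=> g_surj y; apply: (xgetPex 0 (g_surj y)). Qed.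

Section Words.
Variables (m : nat) (i : nat -> 'I_m).

Lemma iter_sshift k t : iter k (@sshift m) i t = i (t + k)%N.
Proof. by elim: k t => [|k IH] t /=; rewrite ?addn0 // /sshift IH addSnnS. Qed.

Lemma wprefixD k t : wprefix i (k + t) = wprefix i k ++ wprefix (iter k (@sshift m) i) t.
Proof.
rewrite /wprefix iotaD map_cat add0n; congr (_ ++ _).
rewrite -[k in iota k]addn0 iotaDl -map_comp; apply: eq_map => s /=.
by rewrite iter_sshift addnC.
Qed.

Lemma wprefixS k : wprefix i k.+1 = rcons (wprefix i k) (i k).
Proof. by rewrite -addn1 wprefixD -cats1 /wprefix /= iter_sshift. Qed.

Lemma wprefix_cons a k :
  wprefix (fun t => if t is t'.+1 then i t' else a) k.+1 = a :: wprefix i k.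
Proof. by rewrite /wprefix /= -[1%N]addn0 iotaDl -map_comp. Qed.

End Words.

Section Cost.
Variables (R : realType) (m : nat) (c : 'I_m -> R).

Lemma cost_cat w1 w2 : cost c (w1 ++ w2) = cost c w1 + cost c w2.
Proof. by rewrite /cost big_cat. Qed.

Lemma cost_cons a w : cost c (a :: w) = c a + cost c w.
Proof. by rewrite /cost big_cons. Qed.

Lemma cost_rcons w a : cost c (rcons w a) = cost c w + c a.
Proof. by rewrite -cats1 cost_cat /cost big_seq1. Qed.

End Cost.

Section Compositions.
Variables (R : realType) (n m : nat) (f : 'I_m -> 'rV[R]_n -> 'rV[R]_n).

Lemma wcomp_rcons w a x : wcomp f (rcons w a) x = wcomp f w (f a x).
Proof. by elim: w => [|b w IH] //=; rewrite IH. Qed.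

Lemma wcompinv_cat w1 w2 x : wcompinv f (w1 ++ w2) x = wcompinv f w1 (wcompinv f w2 x).
Proof. by elim: w1 => [|a w1 IH] //=; rewrite IH. Qed.

Lemma wcomp_rev_wcompinv w :
  (forall l, cancel (inv_map (f l)) (f l)) -> cancel (wcompinv f w) (wcomp f (rev w)).
Proof.
move=> fKV; elim: w => [|a w IH] x //=.
by rewrite rev_cons wcomp_rcons fKV IH.
Qed.

End Compositions.

Lemma imgc_comp (R : realType) (n : nat) (g h : 'rV[R]_n -> 'rV[R]_n) C :
  imgc g (imgc h C) = imgc (g \o h) C.
Proof. by rewrite /imgc image_comp; apply: eq_imagel => B _ /=; rewrite image_comp. Qed.

Section PiT.
Variables (R : realType) (n m : nat) (f : 'I_m -> 'rV[R]_n -> 'rV[R]_n).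
Variables (c : 'I_m -> R) (T : set 'rV[R]_n).
Hypothesis fK : forall l, cancel (f l) (inv_map (f l)).
Hypothesis fKV : forall l, cancel (inv_map (f l)) (f l).

Lemma PiT_wprefixS i k : PiT f c T (wprefix i k) `<=` PiT f c T (wprefix i k.+1).
Proof.
move=> _ [_ [j [l [/andP [lo hi] ->]]] <-].
case: l lo hi => [|l] lo hi; first by rewrite sub0n in lo; lra.
pose j' t := if t is t'.+1 then j t' else i k.
exists (wcomp f (wprefix j' l.+2) @` T).
  exists j', l.+2; split => //.
  rewrite !subn1 /= in lo *.
  rewrite (wprefixS i k) cost_rcons !wprefix_cons !(cost_cons _ (i k)).
  by apply/andP; split; lra.
rewrite (wprefixS i k) wprefix_cons !image_comp; apply: eq_imagel => x _.
by rewrite !compE -cats1 wcompinv_cat /= fK.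
Qed.

Lemma PiT_wprefix_le i k k' :
  (k <= k')%N -> PiT f c T (wprefix i k) `<=` PiT f c T (wprefix i k').
Proof.
move=> /subnK <-; elim: (k' - k)%N => [|t IH] //.
by apply: subset_trans IH _; apply: PiT_wprefixS.
Qed.

Lemma PiTinf_wprefixD i p :
  PiTinf f c T i = \bigcup_(k in [set k | (0 < k)%N]) PiT f c T (wprefix i (p + k)).
Proof.
apply/seteqP; split=> A [k /= k0 HA].
  by exists k => //; apply: PiT_wprefix_le HA; apply: leq_addl.
by exists (p + k)%N => //=; rewrite addn_gt0 k0 orbT.
Qed.

Lemma PiT_wprefix_shift i j p q k :
  iter p (@sshift m) i = iter q (@sshift m) j ->
  cost c (wprefix i p) = cost c (wprefix j q) ->
  PiT f c T (wprefix i (p + k)) =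
  imgc (wcompinv f (wprefix i p) \o wcomp f (rev (wprefix j q)))
    (PiT f c T (wprefix j (q + k))).
Proof.
move=> shift_eq cost_eq; rewrite !wprefixD shift_eq /PiT !cost_cat cost_eq imgc_comp.
congr imgc; apply: funext => x /=.
by rewrite !wcompinv_cat wcomp_rev_wcompinv.
Qed.

End PiT.

Theorem theorem2 (R : realType) (n m : nat)
  (f : 'I_m -> 'rV[R]_n -> 'rV[R]_n) (lam a c : 'I_m -> R)
  (Hsim : forall l x y, enorm (f l x - f l y) = lam l * enorm (x - y))
  (Hlam : forall l, 0 < lam l < 1)
  (Hdistinct : exists l1 l2, f l1 <> f l2)
  (Hosc : OSC f)
  (Ha : forall l, lam l = (\big[Num.max/0]_(l' < m) lam l') `^ a l)
  (Hc : forall l, c l = a l)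
  (i j : nat -> 'I_m) (p q : nat)
  (Hshift : iter p (@sshift m) i = iter q (@sshift m) j)
  (Hcost : cost c (wprefix i p) = cost c (wprefix j q))
  (T : set 'rV[R]_n) (HT : closed T) :
  PiTinf f c T i =
  imgc (wcompinv f (wprefix i p) \o wcomp f (seq.rev (wprefix j q))) (PiTinf f c T j).
Proof.
have lam_gt0 l : 0 < lam l by case/andP: (Hlam l).
have fK l : cancel (f l) (inv_map (f l)).
  exact/inv_mapK/(similitude_inj (lam_gt0 l) (Hsim l)).
have fKV l : cancel (inv_map (f l)) (f l).
  exact/inv_mapKV/(similitude_surj (lam_gt0 l) (Hsim l)).
rewrite (PiTinf_wprefixD c T fK i p) (PiTinf_wprefixD c T fK j q).
rewrite /imgc image_bigcup; apply: eq_bigcupr => k _.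
exact: (PiT_wprefix_shift T fKV k Hshift Hcost).
Qed.
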